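(* Let $U=[a_1,b_1]\cup\dots\cup[a_k,b_k]\subseteq\mathbb{R}$ with $a_1\le b_1<a_2\le b_2<\dots<a_k\le b_k$. Suppose $f=\sum_{i=0}^{2d}a_i(x)y^i\in\mathbb{R}[x,y]$ is non-negative on $U\times\mathbb{R}$, has only finitely many zeros in $U\times\mathbb{R}$, and $a_{2d}(x)>0$ for all $x\in U$. Then there exists $\epsilon(x)\in\mathbb{R}[x]$ with $\epsilon(x)\ge0$ on $U$ such that $f(x,y)\ge\epsilon(x)(1+y^2)^d$ for all $(x,y)\in U\times\mathbb{R}$, and for each $x\in U$, $\epsilon(x)=0$ if and only if there exists $y\in\mathbb{R}$ with $f(x,y)=0$. *)

From HB Require Import structures.
From mathcomp Require Import all_boot all_order all_algebra.
From mathcomp Require Import boolp classical_sets cardinality reals.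
Set Implicit Arguments. Unset Strict Implicit. Unset Printing Implicit Defensive.
Import Order.TTheory GRing.Theory Num.Theory.
Local Open Scope ring_scope.

(* A bivariate polynomial f in R[x,y] is represented as an element of
   {poly {poly R}}: a polynomial in y whose coefficients a_i are polynomials
   in x, i.e. f = \sum_i a_i(x) y^i with a_i = f`_i. *)
Definition eval2 (R : realType) (f : {poly {poly R}}) (x y : R) : R :=
  (map_poly (fun p : {poly R} => p.[x]) f).[y].

(* U = [a_0,b_0] u ... u [a_{k-1},b_{k-1}] (0-indexed). *)
Definition inU (R : realType) (k : nat) (a b : nat -> R) (x : R) : Prop :=
  exists2 i : nat, (i < k)%N & a i <= x <= b i.

Definition intervals_ok (R : realType) (k : nat) (a b : nat -> R) : Prop :=
  (forall i : nat, (i < k)%N -> a i <= b i) /\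
  (forall i : nat, (i.+1 < k)%N -> b i < a i.+1).

(* On the compact set U the leading coefficient of f is bounded below, so for
   |y| >= Y we have f(x, y) >= f(x, 0) + al (1 + y^2)^d, and for |y| <= Y it
   suffices to bound below the minimum m(x) of f(x, .), which is attained at a
   critical point.  Critical values are roots in t of the resultant
   Res_y(f(x, y) - t, d f/dy (x, y)) = t^s R1(x, t) with r := R1(x, 0) <> 0;
   this gives |r(x)| <= C m(x) whenever 0 < m(x) <= 1.  Write r = Q W where W
   does not vanish at the finitely many abscissas Z of zeros of f and Q divides
   a power of V := prod_(z in Z) (X - z).  Where |W| is small, m is bounded
   below by compactness of f + |W| > 0; elsewhere |Q| <= C' m.  Hence
   m >= gam V^(2n) on U, and eps := c V^(2n) works for c > 0 small. *)

From HB Require Import structures.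
From mathcomp Require Import all_boot all_order all_algebra.
From mathcomp Require Import boolp classical_sets cardinality reals.
From mathcomp Require Import topology normedtype derive.
From mathcomp Require Import zify ring lra.
Import Order.TTheory GRing.Theory Num.Theory numFieldNormedType.Exports.
Set Implicit Arguments.
Unset Strict Implicit.
Unset Printing Implicit Defensive.

Local Open Scope ring_scope.

Lemma coprimep_subC (F : fieldType) (p : {poly F}) (s t : F) :
  s != t -> coprimep (p - s%:P) (p - t%:P).
Proof.
move=> st; have -> : p - t%:P = 1 * (p - s%:P) + (s - t) *: 1.
  by rewrite alg_polyC polyCB; ring.
by rewrite coprimep_addl_mul coprimepZr ?coprimep1 // subr_eq0.
Qed.

Lemma pairwise_coprimep_dvdp (F : fieldType) (q : {poly F}) (g : nat -> {poly F}) :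
  q != 0 -> (forall i j, i != j -> coprimep (g i) (g j)) -> (forall i, g i %| q) ->
  exists i, (size (g i) <= 1)%N.
Proof.
move=> q0 cop gq; apply/not_existsP => g_gt1.
have {}g_gt1 i : (1 < size (g i))%N by rewrite ltnNge; apply/negP/g_gt1.
have prod_dvd n : (\prod_(i < n) g i %| q) && (n < size (\prod_(i < n) g i)%R)%N.
  elim: n => [|n /andP[dvd_n size_n]]; first by rewrite big_ord0 dvd1p size_poly1.
  have cop_n : coprimep (\prod_(i < n) g i) (g n).
    apply: (big_ind (fun P => coprimep P (g n))) => [|P P'|i _]; first exact: coprime1p.
      by rewrite coprimepMl => -> ->.
    by apply: cop; rewrite neq_ltn ltn_ord.
  have prod_neq0 : \prod_(i < n) g i != 0 by rewrite -size_poly_gt0 (leq_ltn_trans _ size_n).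
  have g_neq0 : g n != 0 by rewrite -size_poly_gt0 (ltn_trans _ (g_gt1 n)).
  rewrite big_ord_recr /= Gauss_dvdp // dvd_n gq size_mul //.
  by move: size_n (g_gt1 n); rewrite /=; set a := size _; set b := size _; lia.
have /andP[dvd_q size_q] := prod_dvd (size q).
by move: size_q; rewrite ltnNge dvdp_leq.
Qed.

Lemma exists_coprimep_subC (F : numFieldType) (p q : {poly F}) :
  q != 0 -> exists t : F, coprimep (p - t%:P) q.
Proof.
move=> q0; pose g i := gcdp (p - (i%:R : F)%:P) q.
have [i j ij|i|i size_g] := @pairwise_coprimep_dvdp _ q g q0.
- apply: (coprimep_dvdl (dvdp_gcdl _ _)); apply: (coprimep_dvdr (dvdp_gcdl _ _)).
  by apply: coprimep_subC; rewrite eqr_nat.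
- exact: dvdp_gcdr.
- exists i%:R; rewrite coprimep_def eqn_leq size_g size_poly_gt0 gcdp_eq0.
  by rewrite negb_and q0 orbT.
Qed.

Section DerivativeCharZero.
Variables (A : idomainType) (p : {poly A}).
Hypothesis pchar0 : [pchar A] =i pred0.

Lemma size_deriv_pchar0 : size p^`() = (size p).-1.
Proof.
have [size_le1|size_gt1] := leqP (size p) 1.
  by rewrite [p]size1_polyC // derivC size_poly0 size_polyC; case: (_ != 0).
rewrite size_poly_eq //.
have -> : (size p).-2.+1 = (size p).-1 by case: (size p) size_gt1 => [|[]].
rewrite -mulr_natl mulf_eq0 negb_or (pcharf0P _).1 // -lead_coefE.
by rewrite lead_coef_eq0 -size_poly_gt0; case: (size p) size_gt1 => [|[]].
Qed.

Lemma lead_coef_deriv_pchar0 : lead_coef p^`() = lead_coef p *+ (size p).-1.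
Proof.
have [size_le1|size_gt1] := leqP (size p) 1.
  by rewrite [p]size1_polyC // derivC lead_coef0 size_polyC; case: (_ != 0).
rewrite lead_coefE size_deriv_pchar0 coef_deriv lead_coefE.
by case: (size p) size_gt1 => [|[|n]].
Qed.

End DerivativeCharZero.

Section CriticalResultant.
Variable F : numFieldType.
Implicit Types f : {poly {poly F}}.

Local Notation eval_xt x t := (horner_eval t \o map_poly (horner_eval x)).

Lemma eval_xt_liftC f x t :
  map_poly (eval_xt x t) (map_poly polyC f) = map_poly (horner_eval x) f.
Proof.
rewrite -map_poly_comp; apply: eq_map_poly => c /=.
by rewrite map_polyC /= horner_evalE hornerC.
Qed.

Lemma eval_xt_liftC_subX f x t :
  map_poly (eval_xt x t) (map_poly polyC f - ('X)%:P) =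
  map_poly (horner_eval x) f - t%:P.
Proof.
by rewrite rmorphB /= eval_xt_liftC map_polyC /= map_polyX horner_evalE hornerX.
Qed.

Lemma eval_xt_liftC_deriv f x t :
  map_poly (eval_xt x t) (map_poly polyC f)^`() = (map_poly (horner_eval x) f)^`().
Proof. by rewrite deriv_map eval_xt_liftC deriv_map. Qed.

(* The resultant in y of f(x, y) - t and d f/dy (x, y), a polynomial in t
   with coefficients in F[x]. *)
Definition critical_resultant f : {poly {poly F}} :=
  resultant (map_poly polyC f - ('X)%:P) (map_poly polyC f)^`().

Variable f : {poly {poly F}}.
Hypothesis size_f : (2 < size f)%N.

Let pchar0_poly : [pchar {poly F}] =i pred0.
Proof. by move=> n; rewrite pchar_poly pchar_num. Qed.

Let size_liftC_subX : size (map_poly polyC f - ('X)%:P) = size f.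
Proof.
rewrite size_polyDl size_map_polyC // size_polyN.
by rewrite (leq_ltn_trans (size_polyC_leq1 _)) // (ltn_trans _ size_f).
Qed.

Let size_liftC_deriv : size (map_poly polyC f)^`() = (size f).-1.
Proof. by rewrite deriv_map size_map_polyC size_deriv_pchar0. Qed.

Lemma critical_resultant_root x y :
  (map_poly (horner_eval x) f)^`().[y] = 0 ->
  (map_poly (horner_eval x) (critical_resultant f)).[(map_poly (horner_eval x) f).[y]] = 0.
Proof.
move=> crit_y; set t := (map_poly (horner_eval x) f).[y].
have [||[u v] _ /= bezout] :=
  @resultant_in_ideal _ (map_poly polyC f - ('X)%:P) (map_poly polyC f)^`().
- by rewrite size_liftC_subX (ltn_trans _ size_f).
- by rewrite size_liftC_deriv; case: (size f) size_f => [|[|[]]].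
have := congr1 (fun P => (map_poly (eval_xt x t) P).[y]) bezout.
rewrite /= map_polyC hornerC rmorphD !rmorphM /= hornerD !hornerM.
rewrite eval_xt_liftC_subX eval_xt_liftC_deriv crit_y hornerD hornerN hornerC subrr.
by rewrite !mulr0 addr0.
Qed.

Lemma critical_resultant_neq0 x : (lead_coef f).[x] != 0 -> critical_resultant f != 0.
Proof.
move=> lead_x; pose fx := map_poly (horner_eval x) f.
have size_fx : size fx = size f by rewrite size_map_poly_id0.
have lead_deriv_x : (lead_coef f^`()).[x] != 0.
  rewrite lead_coef_deriv_pchar0 // -horner_evalE rmorphMn /= mulrn_eq0 negb_or lead_x.
  by case: (size f) size_f => [|[|[]]].
have dfx_neq0 : fx^`() != 0.
  rewrite -size_poly_gt0 size_deriv_pchar0; last exact: pchar_num.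
  by rewrite size_fx; case: (size f) size_f => [|[|[]]].
(* Specialising at [x] and at a non-critical value [t] gives a nonzero resultant. *)
have [t cop_t] := @exists_coprimep_subC _ fx _ dfx_neq0.
apply: contraTneq cop_t => res0.
have := @map_resultant _ _ (horner_eval t \o map_poly (horner_eval x))
  (map_poly polyC f - ('X)%:P) (map_poly polyC f)^`().
rewrite -/(critical_resultant f) res0 rmorph0 eval_xt_liftC_subX eval_xt_liftC_deriv.
rewrite lead_coefDl ?size_map_polyC ?size_polyN; last first.
  by rewrite (leq_ltn_trans (size_polyC_leq1 _)) // (ltn_trans _ size_f).
rewrite deriv_map !lead_coef_map_inj; try exact: polyC_inj.
rewrite /= !map_polyC /= !horner_evalE !hornerC => /(_ lead_x lead_deriv_x) /esym/eqP.
by rewrite resultant_eq0 coprimep_def -/fx => /gtn_eqF ->.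
Qed.

End CriticalResultant.

Lemma split_roots (F : fieldType) (c : {poly F}) (s : seq F) : c != 0 ->
  exists (Q W : {poly F}) (E : nat), [/\ c = Q * W,
    forall z, z \in s -> W.[z] != 0 & Q %| (\prod_(z <- s) ('X - z%:P)) ^+ E].
Proof.
move=> c0; elim: s => [|a s [Q [W [E [cQW W_s Q_dvd]]]]].
  by exists 1, c, 0%N; rewrite mul1r dvd1p.
have W0 : W != 0 by apply: contraNneq c0 => W0; rewrite cQW W0 mulr0.
have [m [W' W'a EW]] := multiplicity_XsubC W a; rewrite W0 /= in W'a.
exists (Q * ('X - a%:P) ^+ m), W', (E + m)%N; split.
- by rewrite cQW EW mulrA mulrAC.
- move=> z; rewrite in_cons => /orP[/eqP -> //|zs].
  by apply: contraNneq (W_s z zs) => W'z; rewrite EW hornerM W'z mul0r.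
- rewrite big_cons exprMn mulrC; apply: dvdp_mul; first exact: dvdp_exp2l (leq_addl _ _).
  by apply: dvdp_trans Q_dvd (dvdp_exp2l _ (leq_addr _ _)).
Qed.

Lemma norm_coef0_le_root (R : numDomainType) (r : {poly R}) (n : nat) (m : R) :
  (size r <= n)%N -> 0 <= m <= 1 -> r.[m] = 0 ->
  `|r`_0| <= m * \sum_(i < n) `|r`_i|.
Proof.
case: n => [|n] size_r /andP[m0 m1].
  by move: size_r; rewrite leqn0 size_poly_eq0 => /eqP->; rewrite coef0 normr0 big_ord0 mulr0.
rewrite (horner_coef_wide _ size_r) !big_ord_recl /= expr0 mulr1 => /eqP.
rewrite addr_eq0 => /eqP ->; rewrite normrN mulrDr.
apply: le_trans (ler_norm_sum _ _ _) _; rewrite -[leLHS]add0r.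
apply: lerD; first by rewrite mulr_ge0.
rewrite mulr_sumr; apply: ler_sum => i _.
rewrite normrM normrX (ger0_norm m0) mulrC ler_wpM2r // /bump /= add1n exprS.
by rewrite ler_piMr // exprn_ile1.
Qed.

Local Open Scope classical_set_scope.

Section CompactBounds.
Variables (T : topologicalType) (R : realType) (K : set T) (g : T -> R).
Hypotheses (compactK : compact K) (cont_g : continuous g).

Lemma compact_ub : exists2 B, 0 < B & forall x, K x -> g x <= B.
Proof.
have [[x0 Kx0]|K0] := pselect (K !=set0); last by exists 1 => // x Kx; case: K0; exists x.
have [c _ max_c] := compact_EVT_max (ex_intro _ x0 Kx0) compactK (continuous_subspaceT cont_g).
exists (`|g c| + 1) => [|x Kx]; first by rewrite ltr_wpDl.
by apply: le_trans (max_c x _) _; rewrite ?inE // (le_trans (ler_norm _)) // lerDl.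
Qed.

Lemma compact_pos_lb : (forall x, K x -> 0 < g x) -> exists2 c, 0 < c & forall x, K x -> c <= g x.
Proof.
move=> g_gt0.
have [[x0 Kx0]|K0] := pselect (K !=set0); last by exists 1 => // x Kx; case: K0; exists x.
have [c Kc min_c] := compact_EVT_min (ex_intro _ x0 Kx0) compactK (continuous_subspaceT cont_g).
by exists (g c) => [|x Kx]; [apply: g_gt0; rewrite -inE|apply: min_c; rewrite inE].
Qed.

End CompactBounds.

Lemma compact_inU (R : realType) (k : nat) (a b : nat -> R) : compact [set x | inU k a b x].
Proof.
elim: k => [|k IH].
  by rewrite (_ : [set x | _] = set0); [exact: compact0|apply/seteqP; split=> x // [i]].
rewrite (_ : [set x | _] = [set x | inU k a b x] `|` `[a k, b k]).
  exact: compactU IH (@segment_compact _ _ _).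
apply/seteqP; split => x /=.
- case => i; rewrite ltnS leq_eqVlt => /orP[/eqP -> abx|ik abx]; last by left; exists i.
  by right; rewrite /= in_itv.
- case => [[i ik abx]|]; first by exists i => //; exact: ltnW.
  by rewrite /= in_itv => abx; exists k.
Qed.

Lemma continuous_comp_fst (R : realType) (g : R -> R) :
  continuous g -> continuous (fun z : R * R => g z.1).
Proof. by move=> cont_g z; apply: (continuous_comp (f := fst)); [exact: cvg_fst|exact: cont_g]. Qed.

Lemma eval2E (R : realType) (f : {poly {poly R}}) x y :
  eval2 f x y = (map_poly (horner_eval x) f).[y].
Proof. by []. Qed.

Lemma continuous_eval2 (R : realType) (f : {poly {poly R}}) :
  continuous (fun z : R * R => eval2 f z.1 z.2).
Proof.
elim/poly_ind: f => [|p c IH].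
  rewrite (_ : (fun z => _) = fun=> 0); first exact: cst_continuous.
  by apply/funext => z; rewrite eval2E map_poly0 horner0.
rewrite (_ : (fun z => _) = fun z : R * R => eval2 p z.1 z.2 * z.2 + c.[z.1]).
  move=> z; apply: cvgD; last exact: (continuous_comp_fst (@continuous_horner _ c)).
  by apply: cvgM; [exact: IH|exact: cvg_snd].
apply/funext => z; rewrite !eval2E rmorphD rmorphM /= map_polyX map_polyC /=.
by rewrite hornerD hornerMX hornerC.
Qed.

Lemma continuous_norm_horner (R : realType) (p : {poly R}) : continuous (fun x => `|p.[x]|).
Proof. by move=> x; apply: continuous_comp; [exact: continuous_horner|exact: norm_continuous]. Qed.

Lemma compact_sum_norm_horner_ub (R : realType) (K : set R) (p : nat -> {poly R}) (n : nat) :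
  compact K -> exists B, forall x, K x -> \sum_(i < n) `|(p i).[x]| <= B.
Proof.
move=> compactK; elim: n => [|n [B le_B]]; first by exists 0 => x _; rewrite big_ord0.
have [B' _ le_B'] := compact_ub compactK (@continuous_norm_horner _ (p n)).
by exists (B + B') => x Kx; rewrite big_ord_recr lerD ?le_B ?le_B'.
Qed.

Lemma poly_critical_global_min (R : realType) (p : {poly R}) (Y : R) : 0 <= Y ->
  (forall y, Y <= `|y| -> p.[0] <= p.[y]) ->
  exists c, [/\ `|c| <= Y, forall y, p.[c] <= p.[y] & (deriv p).[c] = 0].
Proof.
move=> Y0 tail; have NYY : - Y <= Y by lra.
have [c cY min_c] := EVT_min NYY (continuous_subspaceT (@continuous_horner _ p)).
have {}cY : `|c| <= Y by rewrite ler_norml; move: cY; rewrite in_itv.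
have global_min y : p.[c] <= p.[y].
  have [yY|Yy] := leP `|y| Y; first by apply: min_c; rewrite in_itv /= -ler_norml.
  by apply: le_trans (tail _ (ltW Yy)); apply: min_c; rewrite in_itv /= oppr_le0 Y0.
exists c; split => //.
have c_in : c \in `](- Y - 1), (Y + 1)[%R by rewrite in_itv /=; move: cY; rewrite ler_norml; lra.
have := derive1_at_min _ (fun t _ => @derivable_horner R p t) c_in (fun t _ => global_min t).
move=> /(_ ltac:(lra)) is_der0.
by rewrite -(@derive_val _ _ _ _ _ _ _ (is_derive_poly p c)) (@derive_val _ _ _ _ _ _ _ is_der0).
Qed.

Lemma norm_sum_mul_exp_le (R : numDomainType) (a : nat -> R) (y : R) (n : nat) :
  1 <= `|y| -> `|\sum_(i < n) a i * y ^+ i| <= (\sum_(i < n) `|a i|) * `|y| ^+ n.-1.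
Proof.
move=> y1; apply: le_trans (ler_norm_sum _ _ _) _; rewrite mulr_suml.
apply: ler_sum => i _; rewrite normrM normrX ler_wpM2l // ler_weXn2l //.
by rewrite -ltnS (leq_trans (ltn_ord i)) // leqSpred.
Qed.

Section Coercivity.
Variables (R : realType) (K : set R) (d : nat) (f : {poly {poly R}}).
Hypotheses (compactK : compact K) (d_gt0 : (0 < d)%N) (size_f : (size f <= (2 * d).+1)%N).
Hypothesis lead_gt0 : forall x, K x -> 0 < (f`_(2 * d)).[x].

Lemma eval2_split_lead x y : eval2 f x y =
  \sum_(i < 2 * d) (f`_i).[x] * y ^+ i + (f`_(2 * d)).[x] * y ^+ (2 * d).
Proof.
rewrite eval2E (horner_coef_wide _ (leq_trans (size_poly _ _) size_f)).
by rewrite big_ord_recr /=; congr (_ + _); [apply: eq_bigr => i _|]; rewrite coef_map.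
Qed.

Lemma coercive_eval2 : exists2 al, 0 < al & exists2 Y, 0 <= Y &
  forall x y, K x -> Y <= `|y| -> eval2 f x 0 + al * (1 + y ^+ 2) ^+ d <= eval2 f x y.
Proof.
have [al al_gt0 le_al] := compact_pos_lb compactK (@continuous_horner _ (f`_(2 * d))) lead_gt0.
have [B le_B] := compact_sum_norm_horner_ub (fun i => f`_i) (2 * d) compactK.
exists (al / 2 ^+ d.+2); first by rewrite divr_gt0 ?exprn_gt0.
have B_al : 0 <= 4 * `|B| / al by rewrite divr_ge0 ?mulr_ge0 // ltW.
exists (1 + 4 * `|B| / al); first by rewrite addr_ge0.
move=> x y Kx Yy; set N := (2 * d)%N.
have y1 : 1 <= `|y| by apply: le_trans Yy; rewrite lerDl.
have al_y : 4 * `|B| <= al * `|y|.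
  have := ler_wpM2l (ltW al_gt0) Yy.
  by rewrite mulrDr mulr1 mulrCA divff ?gt_eqF // mulr1; lra.
have N_gt0 : (0 < N)%N by rewrite muln_gt0.
pose z := `|y| ^+ N.-1.
have z1 : 1 <= z by rewrite exprn_ege1.
have yN : `|y| ^+ N = `|y| * z by rewrite -exprS prednK.
have f_x0 : eval2 f x 0 <= `|B|.
  rewrite eval2E horner_coef0 coef_map /=; apply: le_trans (ler_norm _) _.
  apply: le_trans (ler_norm B); apply: le_trans (le_B x Kx).
  by rewrite -/N -(prednK N_gt0) big_ord_recl lerDl sumr_ge0.
have low_terms : `|\sum_(i < N) (f`_i).[x] * y ^+ i| <= `|B| * z.
  apply: le_trans (norm_sum_mul_exp_le (fun i => (f`_i).[x]) N y1) _.
  rewrite ler_wpM2r ?(le_trans ler01) //.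
  exact: le_trans (le_B x Kx) (ler_norm B).
have lead_term : al * (`|y| * z) <= (f`_N).[x] * y ^+ N.
  have yN_ge0 : 0 <= y ^+ N by rewrite /N mulnC exprM sqr_ge0.
  by rewrite -yN -normrX ger0_norm // ler_wpM2r // le_al.
have growth : (1 + y ^+ 2) ^+ d <= 2 ^+ d * (`|y| * z).
  have y2 : `|y| ^+ 2 = y ^+ 2 by rewrite real_normK ?num_real.
  rewrite -yN /N exprM y2 -exprMn; apply: lerXn2r; rewrite ?nnegrE;
    by have := sqr_ge0 y; have := exprn_ege1 2 y1; rewrite y2; lra.
have al_w : 4 * (`|B| * z) <= al * (`|y| * z).
  by rewrite !mulrA ler_wpM2r // (le_trans ler01).
have B_z : `|B| <= `|B| * z by rewrite ler_peMr.
have scaled_growth : al / 2 ^+ d.+2 * (1 + y ^+ 2) ^+ d <= al / 4 * (`|y| * z).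
  apply: le_trans (ler_wpM2l _ growth) _; first by rewrite divr_ge0 ?exprn_ge0 // ltW.
  suff -> : al / 2 ^+ d.+2 * (2 ^+ d * (`|y| * z)) = al / 4 * (`|y| * z) by [].
  have two_d : 2 ^+ d != 0 :> R by rewrite expf_neq0 // pnatr_eq0.
  by rewrite !exprS; field.
move: low_terms; rewrite [eval2 f x y]eval2_split_lead -/N ler_norml => /andP[low _].
have := normr_ge0 B; lra.
Qed.

End Coercivity.

Section CriticalValues.
Variables (R : realType) (K : set R) (f : {poly {poly R}}) (x1 : R).
Hypotheses (compactK : compact K) (size_f : (2 < size f)%N) (lead_x1 : (lead_coef f).[x1] != 0).

Lemma critical_value_bound : exists2 r : {poly R}, r != 0 & exists C, forall x c, K x ->
  (deriv (map_poly (horner_eval x) f)).[c] = 0 -> 0 < eval2 f x c <= 1 ->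
  `|r.[x]| <= eval2 f x c * C.
Proof.
have [s [R1 R1_0 eq_res]] := multiplicity_XsubC (critical_resultant f) 0.
rewrite (critical_resultant_neq0 size_f lead_x1) polyC0 subr0 /root horner_coef0 in R1_0 eq_res.
have [C le_C] := compact_sum_norm_horner_ub (fun i => R1`_i) (size R1) compactK.
exists R1`_0 => //; exists C => x c Kx crit_c /andP[m_gt0 m_le1].
have := critical_resultant_root size_f crit_c; rewrite -/(eval2 f x c) eq_res.
rewrite rmorphM rmorphXn /= map_polyX hornerM hornerXn => /eqP.
rewrite mulf_eq0 expf_eq0 (gt_eqF m_gt0) andbF orbF => /eqP root_R1.
have m01 : 0 <= eval2 f x c <= 1 by rewrite ltW.
have := norm_coef0_le_root (r := map_poly (horner_eval x) R1) (size_poly _ _) m01 root_R1.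
rewrite coef_map => /le_trans; apply; apply: ler_wpM2l; first exact: ltW.
by under eq_bigr do rewrite coef_map; exact: le_C.
Qed.

End CriticalValues.

Definition even_vanishing_poly (R : nzRingType) (Z : seq R) (n : nat) : {poly R} :=
  (\prod_(z <- Z) ('X - z%:P)) ^+ (2 * n.+1).

Lemma even_vanishing_poly_ge0 (R : realDomainType) (Z : seq R) n x :
  0 <= (even_vanishing_poly Z n).[x].
Proof. by rewrite horner_exp exprM exprn_ge0 ?sqr_ge0. Qed.

Lemma even_vanishing_poly_eq0 (R : idomainType) (Z : seq R) n x :
  ((even_vanishing_poly Z n).[x] == 0) = (x \in Z).
Proof. by rewrite horner_exp expf_eq0 muln_gt0 -root_prod_XsubC. Qed.

Section CriticalValueLowerBound.
Variables (R : realType) (K : set R) (f : {poly {poly R}}) (Y : R) (Z : seq R).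
Variables (r : {poly R}) (C : R).
Hypotheses (compactK : compact K) (f_ge0 : forall x y, K x -> 0 <= eval2 f x y).
Hypothesis zeros_in_Z : forall x y, K x -> eval2 f x y = 0 -> x \in Z.
Hypothesis r_neq0 : r != 0.
Hypothesis r_le_critical_value : forall x c, K x ->
  (deriv (map_poly (horner_eval x) f)).[c] = 0 -> 0 < eval2 f x c <= 1 ->
  `|r.[x]| <= eval2 f x c * C.

Lemma eval2_add_norm_lb (W : {poly R}) : (forall z, z \in Z -> W.[z] != 0) ->
  exists2 g, 0 < g & forall x y, K x -> `|y| <= Y -> g <= eval2 f x y + `|W.[x]|.
Proof.
move=> W_Z; pose G (z : R * R) := eval2 f z.1 z.2 + `|W.[z.1]|.
have cont_G : continuous G.
  move=> z; apply: cvgD; first exact: continuous_eval2.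
  exact: (continuous_comp_fst (@continuous_norm_horner _ W)).
have G_gt0 z : (K `*` `[- Y, Y]) z -> 0 < G z.
  case: z => x y [/= Kx _]; rewrite /G /=.
  have := @f_ge0 x y Kx; rewrite le_eqVlt => /orP[/eqP f0|f_gt0]; last by rewrite ltr_wpDr.
  by rewrite -f0 add0r normr_gt0 W_Z // (zeros_in_Z Kx (esym f0)).
have [g g_gt0 le_g] := compact_pos_lb (compact_setX compactK (@segment_compact _ _ _)) cont_G G_gt0.
exists g => // x y Kx yY; apply: (le_g (x, y)).
by split => //=; rewrite in_itv /= -ler_norml.
Qed.

Lemma even_vanishing_le_critical_value : exists n, exists2 kap, 0 < kap & exists2 bet, 0 < bet &
  forall x c, K x -> `|c| <= Y -> (deriv (map_poly (horner_eval x) f)).[c] = 0 ->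
  eval2 f x c < bet -> (even_vanishing_poly Z n).[x] <= kap * eval2 f x c.
Proof.
have [Q [W [E [r_QW W_Z Q_dvd]]]] := split_roots Z r_neq0.
set V := \prod_(z <- Z) _ in Q_dvd; set T := (V ^+ E %/ Q) * V ^+ E.+2.
have e_QT : even_vanishing_poly Z E = Q * T.
  by rewrite /T mulrA [Q * _]mulrC divpK // -exprD; congr (_ ^+ _); lia.
have [g g_gt0 le_g] := eval2_add_norm_lb W_Z.
have [BT BT_gt0 le_BT] := compact_ub compactK (@continuous_norm_horner _ T).
pose C' := `|C| + 1; have C'_gt0 : 0 < C' by rewrite ltr_wpDl.
exists E, (2 * C' * BT / g); first by rewrite divr_gt0 // !mulr_gt0.
exists (Num.min (g / 2) 1); first by rewrite lt_min ltr01 divr_gt0.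
move=> x c Kx cY crit_c; rewrite lt_min => /andP[m_lt_g m_lt1].
set m := eval2 f x c in m_lt_g m_lt1 *; set e := (even_vanishing_poly Z E).[x].
have m_ge0 : 0 <= m := @f_ge0 x c Kx.
have [xZ|xNZ] := boolP (x \in Z).
  move: xZ; rewrite -(even_vanishing_poly_eq0 Z E) -/e => /eqP ->.
  by rewrite mulr_ge0 // divr_ge0 ?mulr_ge0 // ltW.
have m_gt0 : 0 < m.
  by rewrite lt_def m_ge0 andbT; apply: contraNneq xNZ; exact: zeros_in_Z.
(* Where [W] is small, [f] itself is large; so [W] is large and [r = Q W] bounds [Q]. *)
have W_large : g / 2 < `|W.[x]| by have := le_g x c Kx cY; rewrite -/m; lra.
have m01 : 0 < m <= 1 by rewrite m_gt0 ltW.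
have := r_le_critical_value Kx crit_c m01; rewrite -/m r_QW hornerM normrM => QW_le.
have Q_le : `|Q.[x]| <= 2 * C' * m / g.
  rewrite ler_pdivlMr //.
  have : `|Q.[x]| * (g / 2) <= `|Q.[x]| * `|W.[x]| by rewrite ler_wpM2l // ltW.
  have : m * C <= m * C' by rewrite ler_wpM2l // /C' (le_trans (ler_norm C)) // lerDl.
  lra.
have -> : 2 * C' * BT / g * m = BT * (2 * C' * m / g) by field; rewrite gt_eqF.
rewrite /e -(ger0_norm (even_vanishing_poly_ge0 Z E x)) e_QT hornerM normrM mulrC.
by rewrite ler_pM ?le_BT.
Qed.

Lemma critical_value_ge_even_vanishing : exists n, exists2 gam, 0 < gam &
  forall x c, K x -> `|c| <= Y -> (deriv (map_poly (horner_eval x) f)).[c] = 0 ->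
  gam * (even_vanishing_poly Z n).[x] <= eval2 f x c.
Proof.
have [n [kap kap_gt0 [bet bet_gt0 le_kap]]] := even_vanishing_le_critical_value.
have [BE BE_gt0 le_BE] := compact_ub compactK (@continuous_horner _ (even_vanishing_poly Z n)).
exists n, (Num.min (bet / BE) kap^-1); first by rewrite lt_min !divr_gt0 ?invr_gt0.
move=> x c Kx cY crit_c; set m := eval2 f x c; set e := (even_vanishing_poly Z n).[x].
have e_ge0 : 0 <= e := even_vanishing_poly_ge0 Z n x.
have [m_lt_bet|bet_le_m] := ltP m bet.
  apply: le_trans (ler_wpM2r e_ge0 (_ : _ <= kap^-1)) _; first by rewrite ge_min lexx orbT.
  by rewrite ler_pdivrMl // le_kap.
apply: le_trans (ler_wpM2r e_ge0 (_ : _ <= bet / BE)) _; first by rewrite ge_min lexx.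
rewrite mulrAC ler_pdivrMr //; apply: le_trans (ler_wpM2l (ltW bet_gt0) (le_BE x Kx)) _.
by rewrite ler_pM2r.
Qed.

End CriticalValueLowerBound.

Section LowerCertificate.
Variables (R : realType) (K : set R) (d : nat) (f : {poly {poly R}}) (Z : seq R) (x1 : R).
Hypotheses (compactK : compact K) (d_gt0 : (0 < d)%N) (size_f : (size f <= (2 * d).+1)%N).
Hypotheses (f_ge0 : forall x y, K x -> 0 <= eval2 f x y)
  (lead_gt0 : forall x, K x -> 0 < (f`_(2 * d)).[x]).
Hypotheses (K_x1 : K x1) (zeros_in_Z : forall x y, K x -> eval2 f x y = 0 -> x \in Z).

Let size_f_eq : size f = (2 * d).+1.
Proof.
apply/eqP; rewrite eqn_leq size_f ltnNge; apply/negP => /leq_sizeP/(_ _ (leqnn _)) lead0.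
by have := lead_gt0 K_x1; rewrite lead0 horner0 ltxx.
Qed.

Lemma exists_lower_certificate : exists eps : {poly R}, [/\ forall x, 0 <= eps.[x],
  forall x y, K x -> eps.[x] * (1 + y ^+ 2) ^+ d <= eval2 f x y &
  forall x, eps.[x] = 0 <-> x \in Z].
Proof.
have [al al_gt0 [Y Y_ge0 coercive]] := coercive_eval2 compactK d_gt0 size_f lead_gt0.
have lead_x1 : (lead_coef f).[x1] != 0 by rewrite lead_coefE size_f_eq gt_eqF ?lead_gt0.
have size_f_gt2 : (2 < size f)%N by rewrite size_f_eq; lia.
have [r r_neq0 [C r_le]] := critical_value_bound compactK size_f_gt2 lead_x1.
have [n [gam gam_gt0 gam_le]] :=
  critical_value_ge_even_vanishing Y compactK f_ge0 zeros_in_Z r_neq0 r_le.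
set e := even_vanishing_poly Z n in gam_le *.
have [BE BE_gt0 le_BE] := compact_ub compactK (@continuous_horner _ e).
pose Q0 := (1 + Y ^+ 2) ^+ d; have Q0_gt0 : 0 < Q0 by rewrite exprn_gt0 // ltr_wpDr ?sqr_ge0.
pose c0 := Num.min (al / BE) (gam / Q0).
have c0_gt0 : 0 < c0 by rewrite lt_min !divr_gt0.
exists (c0 *: e); split => [x|x y Kx|x].
- by rewrite hornerZ; apply: mulr_ge0; [exact: ltW|exact: even_vanishing_poly_ge0].
- have e_ge0 : 0 <= e.[x] := even_vanishing_poly_ge0 Z n x.
  have q_ge0 : 0 <= (1 + y ^+ 2) ^+ d by rewrite exprn_ge0 // addr_ge0 ?sqr_ge0.
  rewrite hornerZ; have [Yy|yY] := leP Y `|y|.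
    have c0e_le : c0 * e.[x] <= al.
      apply: le_trans (ler_wpM2r e_ge0 (_ : c0 <= al / BE)) _; first by rewrite ge_min lexx.
      by rewrite mulrAC ler_pdivrMr // ler_wpM2l ?le_BE // ltW.
    apply: le_trans (ler_wpM2r q_ge0 c0e_le) (le_trans _ (coercive x y Kx Yy)).
    by rewrite lerDr f_ge0.
  have tail y' : Y <= `|y'| -> eval2 f x 0 <= eval2 f x y'.
    move=> /(coercive x y' Kx); apply: le_trans; rewrite lerDl.
    by rewrite mulr_ge0 ?exprn_ge0 ?addr_ge0 ?sqr_ge0 // ltW.
  have [c [cY min_c crit_c]] :=
    poly_critical_global_min (p := map_poly (horner_eval x) f) Y_ge0 tail.
  have q_le : (1 + y ^+ 2) ^+ d <= Q0.
    have : `|y| <= Y := ltW yY; rewrite ler_norml => /andP[y_lo y_hi].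
    by apply: lerXn2r; rewrite ?nnegrE ?lerD2l; nra.
  have c0_Q0 : c0 * Q0 <= gam by rewrite -ler_pdivlMr // ge_min lexx orbT.
  apply: le_trans (min_c y); apply: le_trans (gam_le x c Kx cY crit_c).
  apply: le_trans (ler_wpM2l (mulr_ge0 (ltW c0_gt0) e_ge0) q_le) _.
  by rewrite mulrAC ler_wpM2r.
- rewrite hornerZ -(even_vanishing_poly_eq0 Z n) -/e; split => [/eqP|/eqP ->].
    by rewrite mulf_eq0 (gt_eqF c0_gt0).
  by rewrite mulr0.
Qed.

End LowerCertificate.

Theorem lemma4 (R : realType) (k : nat) (a b : nat -> R)
  (d : nat) (f : {poly {poly R}}) :
  intervals_ok k a b ->
  (size f <= (2 * d).+1)%N ->
  (forall x y : R, inU k a b x -> 0 <= eval2 f x y) ->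
  finite_set [set p : R * R | inU k a b p.1 /\ eval2 f p.1 p.2 = 0] ->
  (forall x : R, inU k a b x -> 0 < (f`_(2 * d)).[x]) ->
  exists eps : {poly R},
    (forall x : R, inU k a b x -> 0 <= eps.[x]) /\
    (forall x y : R, inU k a b x ->
        eps.[x] * (1 + y ^+ 2) ^+ d <= eval2 f x y) /\
    (forall x : R, inU k a b x ->
        (eps.[x] = 0 <-> exists y : R, eval2 f x y = 0)).
Proof.
move=> _ size_f f_ge0 fin_zeros lead_gt0.
have [[x1 U_x1]|U0] := pselect (exists x, inU k a b x); last first.
  by exists 0; split; [|split] => [x|x y|x] Ux; case: U0; exists x.
have [d0|d_gt0] := posnP d.
  have f_const : f = (f`_0)%:P by apply: size1_polyC; rewrite d0 in size_f.
  have eval_f x y : eval2 f x y = (f`_0).[x].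
    by rewrite eval2E {1}f_const map_polyC hornerC.
  exists f`_0; rewrite d0; split; [|split] => [x Ux|x y Ux|x Ux].
  - by rewrite -(eval_f x 0) f_ge0.
  - by rewrite expr0 mulr1 eval_f.
  - by split=> [f0x|[y]]; [exists 0|]; rewrite eval_f.
have [s zeros_s] := (finite_seqP _).1 fin_zeros.
have zeros_in_Z x y : inU k a b x -> eval2 f x y = 0 -> x \in map fst s.
  move=> Ux fxy0; have : [set` s] (x, y) by rewrite -zeros_s.
  by move=> /= sxy; apply/mapP; exists (x, y).
have Z_zeros x : x \in map fst s -> exists y, eval2 f x y = 0.
  case/mapP => -[x' y] sxy ->; exists y.
  have : [set p : R * R | inU k a b p.1 /\ eval2 f p.1 p.2 = 0] (x', y) by rewrite zeros_s.
  by case.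
have [eps [eps_ge0 eps_le eps0]] := exists_lower_certificate (@compact_inU _ k a b) d_gt0
  size_f f_ge0 lead_gt0 U_x1 zeros_in_Z.
exists eps; do 2!split => //; move=> x Ux; rewrite eps0; split; first exact: Z_zeros.
by case=> y; exact: zeros_in_Z.
Qed.
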